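(* Assume $l>-\infty$, $r=\infty$, (A2) ($\inf\operatorname{supp}\mu>-\infty$ and there is $y_0\in I$ with $\int_{\mathbb R_+}q(y_0,y_0+ax)\mu(dx)<\infty$ for all $a>0$), and $$\limsup_{x\searrow l}\frac{|\eta(x)|}{x-l}<\infty,\qquad \limsup_{x\nearrow\infty}\frac{|\eta(x)|}{x}<\infty.$$ Then $\liminf_{y\to\infty}G_y(\bar a(y))>0$ and $\liminf_{y\searrow l}G_y(\bar a(y))>0$.
   Context: Let $I=(l,r)$, $\eta\colon\mathbb R\to\mathbb R$ Borel with $\eta\ne0$ on $I$, $1/\eta^2\in L^1_{\mathrm{loc}}(I)$, $\eta=0$ off $I$. $q(y,x)=\int_y^x\int_y^u\frac{2}{\eta^2(z)}dz\,du\in[0,\infty]$ for $y\in I,x\in\mathbb R$. $\mu\ne\delta_0$ is a centered probability measure with finite first moment, $G_y(a)=\int q(y,y+ax)\mu(dx)$, and $\bar a(y)=\frac{l-y}{\inf\operatorname{supp}\mu}$ for $y\in I$. *)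

From HB Require Import structures.
From mathcomp Require Import all_boot all_order all_algebra.
From mathcomp Require Import all_classical all_reals all_analysis.
Set Implicit Arguments. Unset Strict Implicit. Unset Printing Implicit Defensive.
Import Order.TTheory GRing.Theory Num.Theory.
Import numFieldNormedType.Exports.
Local Open Scope classical_set_scope.
Local Open Scope ring_scope.
Local Open Scope ereal_scope.

Section defs.
Variable R : realType.

Definition inv2eta2 (eta : R -> R) (z : R) : \bar R :=
  if eta z == 0%R then +oo else (2 / (eta z ^+ 2))%:E.

(* q(y,x) = int_y^x int_y^u 2/eta^2(z) dz du, oriented integrals;
   for x < y both orientations flip, giving int_x^y int_u^y. *)
Definition qfun (eta : R -> R) (y x : R) : \bar R :=
  if (y <= x)%R then
    \int[lebesgue_measure]_(u in `[y, x]%classic)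
       \int[lebesgue_measure]_(z in `[y, u]%classic) inv2eta2 eta z
  else
    \int[lebesgue_measure]_(u in `[x, y]%classic)
       \int[lebesgue_measure]_(z in `[u, y]%classic) inv2eta2 eta z.

Definition Gfun (eta : R -> R) (mu : probability R R) (y a : R) : \bar R :=
  \int[mu]_x qfun eta y (y + a * x).

Definition supp (mu : probability R R) : set R :=
  [set x | forall U : set R, open U -> U x -> 0 < mu U].

Definition abar (mu : probability R R) (l y : R) : R :=
  ((l - y) / inf (supp mu))%R.

End defs.

From HB Require Import structures.
From mathcomp Require Import all_boot all_order all_algebra.
From mathcomp Require Import all_classical all_reals all_analysis.
From mathcomp Require Import ring lra measurable_realfun.
Import Order.TTheory GRing.Theory Num.Theory.
Import numFieldNormedType.Exports.
Import HBNNSimple.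
Set Implicit Arguments. Unset Strict Implicit. Unset Printing Implicit Defensive.
Local Open Scope classical_set_scope.
Local Open Scope ring_scope.

(* Since mu is centred and is not the Dirac mass at 0, it charges [d, +oo[ and
   ]-oo, -d] for some d > 0; hence m := inf supp mu <= -d < 0 and
   abar(y) = (y - l) / (-m) > 0 on I. For x in the charged region, the point
   y + abar(y) x lies at distance at least h := d (y - l) / (-m) from y, on the
   right for x >= d and on the left for x <= -d. On the segment of length h the
   linear growth of eta bounds 2 / eta^2 below by 2 / (C (y + h))^2 near +oo,
   and by 2 / (C (y - l))^2 near l, so q(y, y + abar(y) x) is at least a
   multiple of (h / (y + h))^2, resp. (h / (y - l))^2; both ratios stay away
   from 0, and integrating over the charged region bounds G_y(abar(y)) below. *)

(* No measurability of [f] is needed: [c * \1_A] is one of the simple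
   functions below [f] in the supremum defining the integral. *)
Lemma integral_ge_mul_measure d (T : measurableType d) (R : realType)
    (mu : {measure set T -> \bar R}) (D A : set T) (f : T -> \bar R) (c : R) :
  measurable A -> A `<=` D -> 0 <= c -> (forall x, D x -> (0 <= f x)%E) ->
  (forall x, A x -> (c%:E <= f x)%E) ->
  (c%:E * mu A <= \int[mu]_(x in D) f x)%E.
Proof.
move=> mA AD c0 f0 fc; rewrite ge0_integralE//.
apply: ereal_sup_ubound; exists (scale_nnsfun (indic_nnsfun R mA) c0).
  move=> x /=; rewrite /patch /mindic indicE.
  have [Ax|nAx] := boolP (x \in A).
    by rewrite mulr1 ifT ?inE; [apply: fc; rewrite -inE | apply: AD; rewrite -inE].
  by rewrite mulr0; case: ifPn => // /[!inE] /f0.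
by rewrite sintegralrM sintegral_indic.
Qed.

Lemma lebesgue_measure_itvcc (R : realType) (a b : R) : a <= b ->
  lebesgue_measure (`[a, b] : set R) = (b - a)%:E.
Proof.
rewrite le_eqVlt => /predU1P[<-|ab]; last by rewrite lebesgue_measure_itv/= lte_fin ab.
by rewrite lebesgue_measure_itv/= ltxx subrr.
Qed.

Lemma integral_itv_ge (R : realType) (f : R -> \bar R) (a b c : R) :
  a <= b -> 0 <= c -> (forall z, a <= z <= b -> (c%:E <= f z)%E) ->
  ((c * (b - a))%:E <= \int[lebesgue_measure]_(z in `[a, b]) f z)%E.
Proof.
move=> ab c0 fc; rewrite EFinM -lebesgue_measure_itvcc//.
apply: integral_ge_mul_measure => // z; rewrite /= in_itv/= => /fc //.
exact: le_trans.
Qed.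

Lemma measure_cover_null d (T : measurableType d) (R : realType)
    (mu : {measure set T -> \bar R}) (A : set T) (F : nat -> set T) :
  measurable A -> (forall n, measurable (F n)) -> A `<=` \bigcup_n F n ->
  (forall n, mu (F n) = 0%E) -> mu A = 0%E.
Proof.
move=> mA mF AF F0; apply/eqP; rewrite -measure_le0.
apply: le_trans (measure_sigma_subadditive mu mF mA AF) _.
by rewrite eseries0 // => n _ _; rewrite F0.
Qed.

Lemma measure_eq0_mul_le0 d (T : measurableType d) (R : realType)
    (mu : {measure set T -> \bar R}) (A : set T) (c : R) :
  0 < c -> (c%:E * mu A <= 0)%E -> mu A = 0%E.
Proof.
move=> c0; rewrite -[leRHS](mule0 c%:E) lee_pmul2l ?lte_fin //.
by rewrite measure_le0 => /eqP.
Qed.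

Section measure_sides.
Variables (R : realType) (mu : {measure set R -> \bar R}).

Lemma null_itv_ge :
  (forall d, 0 < d -> mu `[d, +oo[%classic = 0%E) -> mu `]0, +oo[%classic = 0%E.
Proof.
move=> null.
apply: (measure_cover_null (F := fun n => `[(n.+1%:R^-1 : R), +oo[%classic)) => //.
- move=> x /=; rewrite in_itv/= andbT => /ltr_add_invr[k]; rewrite add0r => kx.
  by exists k => //=; rewrite in_itv/= andbT ltW.
- by move=> n; apply: null; rewrite invr_gt0.
Qed.

Lemma null_itv_le :
  (forall d, 0 < d -> mu `]-oo, - d]%classic = 0%E) -> mu `]-oo, 0[%classic = 0%E.
Proof.
move=> null.
apply: (measure_cover_null (F := fun n => `]-oo, (- n.+1%:R^-1 : R)]%classic)) => //.
- move=> x /=; rewrite in_itv/= -oppr_gt0 => /ltr_add_invr[k]; rewrite add0r => kx.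
  by exists k => //=; rewrite in_itv/= lerNr ltW.
- by move=> n; apply: null; rewrite invr_gt0.
Qed.

Hypothesis mu_int : mu.-integrable setT EFin.

Lemma integral_funepos_eq0P :
  (forall d, 0 < d -> mu `[d, +oo[%classic = 0%E) <->
  (\int[mu]_x (@EFin R)^\+ x = 0)%E.
Proof.
split=> [null|int0 d d0].
- rewrite (negligible_integral _ _ _ (null_itv_ge null)) //;
    last exact: integrable_funepos.
  apply: integral0_eq => x [_ /negP]; rewrite in_itv/= andbT -leNgt => x0.
  by rewrite funeposE; apply/max_idPr; rewrite lee_fin.
- apply: (measure_eq0_mul_le0 d0); rewrite -int0.
  apply: integral_ge_mul_measure => //; first exact: ltW.
  move=> x; rewrite /= in_itv/= andbT => dx.
  by rewrite funeposE le_max lee_fin dx.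
Qed.

Lemma integral_funeneg_eq0P :
  (forall d, 0 < d -> mu `]-oo, - d]%classic = 0%E) <->
  (\int[mu]_x (@EFin R)^\- x = 0)%E.
Proof.
split=> [null|int0 d d0].
- rewrite (negligible_integral _ _ _ (null_itv_le null)) //;
    last exact: integrable_funeneg.
  apply: integral0_eq => x [_ /negP]; rewrite in_itv/= -leNgt => x0.
  by rewrite funenegE; apply/max_idPr; rewrite lee_fin oppr_le0.
- apply: (measure_eq0_mul_le0 d0); rewrite -int0.
  apply: integral_ge_mul_measure => //; first exact: ltW.
  move=> x; rewrite /= in_itv/= => xd.
  by rewrite funenegE le_max lee_fin lerNr xd.
Qed.

End measure_sides.

Lemma dirac0_of_null_sides (R : realType) (mu : probability R R) :
  mu `]-oo, 0[%classic = 0%E -> mu `]0, +oo[%classic = 0%E ->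
  forall A, measurable A -> mu A = \d_(0 : R) A.
Proof.
move=> neg0 pos0.
have off0 : mu (~` [set 0 : R]) = 0%E.
  apply/eqP; rewrite -measure_le0 -[leRHS]adde0 -{1}neg0 -pos0.
  apply: le_trans (measureU2 mu (measurable_itv _) (measurable_itv _)).
  rewrite le_measure ?inE //; [by apply: measurableC|exact: measurableU|].
  move=> x /eqP; rewrite neq_lt => /orP[x0|x0]; [left|right];
    by rewrite /= in_itv/= x0.
move=> A mA; rewrite diracE.
have [A0|nA0] := boolP (0 \in A).
- have CA0 : mu (~` A) = 0%E.
    apply: subset_measure0 off0; [exact: measurableC|by apply: measurableC|].
    by move=> x nAx x0; apply: nAx; rewrite x0 -in_setE.
  by have := probability_setC mu (measurableC mA); rewrite setCK CA0 sube0.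
- apply: subset_measure0 off0; [by []|by apply: measurableC|].
  by move=> x Ax x0; move/negP: nA0; apply; rewrite in_setE -x0.
Qed.

Lemma centred_not_dirac_both_sides (R : realType) (mu : probability R R) :
  mu.-integrable setT EFin -> (\int[mu]_x x%:E = 0)%E ->
  ~ (forall A, measurable A -> mu A = \d_(0 : R) A) ->
  (exists2 d : R, 0 < d & (0 < mu `[d, +oo[%classic)%E) /\
  (exists2 d : R, 0 < d & (0 < mu `]-oo, (- d)%R]%classic)%E).
Proof.
move=> mu_int mu0 not_dirac.
have pos_neg : (forall d, 0 < d -> mu `[d, +oo[%classic = 0%E) ->
    forall d, 0 < d -> mu `]-oo, - d]%classic = 0%E.
  move=> /(integral_funepos_eq0P mu_int) pos0; apply/(integral_funeneg_eq0P mu_int).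
  by move: mu0; rewrite integralE pos0 sub0e => /eqP; rewrite oppe_eq0 => /eqP.
have neg_pos : (forall d, 0 < d -> mu `]-oo, - d]%classic = 0%E) ->
    forall d, 0 < d -> mu `[d, +oo[%classic = 0%E.
  move=> /(integral_funeneg_eq0P mu_int) neg0; apply/(integral_funepos_eq0P mu_int).
  by move: mu0; rewrite integralE neg0 sube0.
have sides_null : (forall d, 0 < d -> mu `[d, +oo[%classic = 0%E) ->
    (forall d, 0 < d -> mu `]-oo, - d]%classic = 0%E) -> False.
  move=> pos0 neg0; apply: not_dirac.
  by apply: dirac0_of_null_sides; [exact: null_itv_le | exact: null_itv_ge].
have mass (S : R -> set R) : ~ (forall d, 0 < d -> mu (S d) = 0%E) ->
    exists2 d, 0 < d & (0 < mu (S d))%E.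
  move=> notnull; apply: contrapT => none; apply: notnull => d d0.
  apply/eqP; rewrite -measure_le0 leNgt; apply/negP => pos.
  by apply: none; exists d.
by split; apply: mass => null; apply: sides_null; auto.
Qed.

Lemma limf_einf_ge (R : realType) (f : R -> \bar R) (F : set_system R) (e : \bar R) :
  F [set x | (e <= f x)%E] -> (e <= limf_einf f F)%E.
Proof.
move=> Fe; rewrite limf_einfE; apply: le_ereal_sup_tmp.
exists (ereal_inf (f @` [set x | (e <= f x)%E])).
  by exists [set x | (e <= f x)%E].
by apply: le_ereal_inf_tmp => _ [x /= ex <-].
Qed.

Lemma limf_esup_lt_pinfty (R : realType) (f : R -> \bar R) (F : set_system R) :
  Filter F -> (limf_esup f F < +oo)%E ->
  exists C : R, F [set x | (f x <= C%:E)%E].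
Proof.
move=> FF; rewrite limf_esupE => /ereal_inf_lt[_ [V FV <-]] supV_lt.
exists (fine (ereal_sup (f @` V))); apply: filterS FV => x Vx /=.
have fx_le : (f x <= ereal_sup (f @` V))%E by apply: ereal_sup_ubound; exists x.
by move: supV_lt fx_le; case: (ereal_sup _) => //= _ /le_trans;
  apply; rewrite leNye.
Qed.

Lemma norm_le_linear_pinfty (R : realType) (g : R -> R) :
  (limf_esup (fun x => (`|g x| / x)%:E) (+oo%R) < +oo)%E ->
  exists C M : R, [/\ 0 < C, 0 <= M & forall x, M < x -> `|g x| <= C * x].
Proof.
move=> /limf_esup_lt_pinfty[C [M [_ gC]]].
exists (Num.max C 1), (Num.max M 0); split; first by rewrite lt_max ltr01 orbT.
  by rewrite le_max lexx orbT.
move=> x; rewrite gt_max => /andP[Mx x0].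
have := gC x Mx; rewrite /= lee_fin ler_pdivrMr // => /le_trans; apply.
by apply: ler_wpM2r; [exact: ltW | rewrite le_max lexx].
Qed.

Lemma norm_le_linear_right (R : realType) (g : R -> R) (l : R) :
  (limf_esup (fun x => (`|g x| / (x - l))%:E) (l^'+) < +oo)%E ->
  exists C e : R,
    [/\ 0 < C, 0 < e & forall x, l < x < l + e -> `|g x| <= C * (x - l)].
Proof.
move=> /limf_esup_lt_pinfty[C] /nbhs_ballP[e e0 gC]; rewrite ball_itv in gC.
exists (Num.max C 1), e; split => //; first by rewrite lt_max ltr01 orbT.
move=> x /andP[lx xle]; have xl0 : 0 < x - l by rewrite subr_gt0.
have /gC : `](l - e)%R, (l + e)%R[%classic x.
  by rewrite /= in_itv/=; apply/andP; split; lra.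
move=> /(_ lx); rewrite /= lee_fin ler_pdivrMr // => /le_trans; apply.
by apply: ler_wpM2r; [exact: ltW | rewrite le_max lexx].
Qed.

Section support.
Variables (R : realType) (mu : probability R R).

(* [s := inf {x | mu [a, x] > 0}] is in the support: [mu [a, s - e/2] = 0]
   while [mu [a, x] > 0] for some [x < s + e], so [mu ]s - e/2, x] > 0]. *)
Lemma supp_le_of_itv (a b : R) :
  (0 < mu `[a, b]%classic)%E -> exists2 s, s <= b & supp mu s.
Proof.
move=> mab; pose E := [set x | (0 < mu `[a, x]%classic)%E].
have a_lbE : lbound E a.
  move=> x; rewrite /E/= leNgt; apply: contraPN => xa.
  by rewrite set_itv_ge ?measure0 ?ltxx // bnd_simp -ltNge.
have E_lb : has_lbound E by exists a.
have Eb : E b by [].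
set s := inf E; exists s; first exact: ge_inf.
move=> U oU Us; have /nbhs_ballP[e /= e0 esU] : nbhs s U by apply: open_nbhs_nbhs.
rewrite ball_itv in esU.
have [x Ex xs] : exists2 x, E x & x < s + e by apply: inf_lt; [exists b | lra].
have t_null : mu `[a, s - e / 2]%classic = 0%E.
  apply/eqP; rewrite -measure_le0 leNgt; apply/negP => /(ge_inf E_lb); lra.
have : (0 < mu `](s - e / 2)%R, x]%classic)%E.
  apply: (lt_le_trans Ex); rewrite -[leRHS]add0e -t_null.
  apply: le_trans (measureU2 mu (measurable_itv _) (measurable_itv _)).
  rewrite le_measure ?inE //; first exact: measurableU.
  move=> z /=; rewrite !in_itv/= => /andP[az zx].
  have [zt|tz] := leP z (s - e / 2); [left|right];
    by rewrite /= ?in_itv/= ?az ?zx ?zt ?tz.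
move=> /lt_le_trans; apply; rewrite le_measure ?inE //; first exact: open_measurable.
apply: subset_trans esU => z /=; rewrite !in_itv/= => /andP[tz zx].
have := ge_inf E_lb Ex; lra.
Qed.

Lemma inf_supp_le (d : R) : has_lbound (supp mu) ->
  (0 < mu `]-oo, d]%classic)%E -> inf (supp mu) <= d.
Proof.
move=> supp_lb mud.
have [n mun] : exists n : nat, (0 < mu `[(d - n%:R)%R, d]%classic)%E.
  apply: contrapT => none; move: mud; rewrite ltNge measure_le0; apply/negP/negPn/eqP.
  apply: (measure_cover_null (F := fun n : nat => `[(d - n%:R)%R, d]%classic)) => //.
    move=> x /=; rewrite in_itv/= => xd; exists (Num.truncn (d - x)).+1 => //=.
    by rewrite in_itv/= xd andbT; have := truncnS_gt (d - x); lra.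
  move=> k; apply/eqP; rewrite -measure_le0 leNgt; apply/negP => pos.
  by apply: none; exists k.
have [s sd supp_s] := supp_le_of_itv mun.
exact: le_trans (ge_inf supp_lb supp_s) sd.
Qed.

End support.

Section q_lower_bounds.
Variables (R : realType) (eta : R -> R).

Lemma inv2eta2_ge0 z : (0 <= inv2eta2 eta z)%E.
Proof.
by rewrite /inv2eta2; case: ifPn => // _; rewrite lee_fin divr_ge0 ?sqr_ge0.
Qed.

Lemma inv2eta2_ge z B : `|eta z| <= B -> ((2 / B ^+ 2)%:E <= inv2eta2 eta z)%E.
Proof.
rewrite /inv2eta2; have [//|eta_nz] := eqVneq (eta z) 0; first by rewrite leey.
move=> etaB; have eta_gt0 : 0 < `|eta z| by rewrite normr_gt0.
have eta2_le : eta z ^+ 2 <= B ^+ 2.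
  rewrite -real_normK ?num_real // ler_sqr ?nnegrE ?(ltW eta_gt0) //.
  exact: le_trans etaB.
have eta2_gt0 : 0 < eta z ^+ 2 by rewrite -real_normK ?num_real // exprn_gt0.
rewrite lee_fin ler_wpM2l // lef_pV2 ?posrE //; exact: lt_le_trans eta2_le.
Qed.

Lemma qfun_ge0 y x : (0 <= qfun eta y x)%E.
Proof.
rewrite /qfun; case: ifPn => _; apply: integral_ge0 => u _;
  apply: integral_ge0 => z _; exact: inv2eta2_ge0.
Qed.

Lemma qfun_ge_right y x h c : 0 < h -> y + h <= x -> 0 <= c ->
  (forall z, y <= z <= y + h -> (c%:E <= inv2eta2 eta z)%E) ->
  ((c * (h / 2) ^+ 2)%:E <= qfun eta y x)%E.
Proof.
move=> h0 hx c0 hc; have yx : y <= x by lra.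
rewrite /qfun yx.
have -> : c * (h / 2) ^+ 2 = c * (h / 2) * ((y + h) - (y + h / 2)) by field.
rewrite EFinM -lebesgue_measure_itvcc; last by lra.
apply: integral_ge_mul_measure => //.
- by move=> u /=; rewrite !in_itv/= => /andP[? ?]; apply/andP; split; lra.
- by apply: mulr_ge0 => //; apply: divr_ge0 => //; exact: ltW.
- by move=> u _; apply: integral_ge0 => z _; exact: inv2eta2_ge0.
move=> u /=; rewrite in_itv/= => /andP[hu ux].
have yu : y <= u by lra.
apply: (le_trans _ (integral_itv_ge yu c0 _)); last first.
  by move=> z /andP[? ?]; apply: hc; lra.
by rewrite lee_fin ler_wpM2l //; lra.
Qed.

Lemma qfun_ge_left y x h c : 0 < h -> x <= y - h -> 0 <= c ->
  (forall z, y - h <= z <= y -> (c%:E <= inv2eta2 eta z)%E) ->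
  ((c * (h / 2) ^+ 2)%:E <= qfun eta y x)%E.
Proof.
move=> h0 hx c0 hc; have yx : (y <= x) = false by apply/negbTE; rewrite -ltNge; lra.
rewrite /qfun yx.
have -> : c * (h / 2) ^+ 2 = c * (h / 2) * ((y - h / 2) - (y - h)) by field.
rewrite EFinM -lebesgue_measure_itvcc; last by lra.
apply: integral_ge_mul_measure => //.
- by move=> u /=; rewrite !in_itv/= => /andP[? ?]; apply/andP; split; lra.
- by apply: mulr_ge0 => //; apply: divr_ge0 => //; exact: ltW.
- by move=> u _; apply: integral_ge0 => z _; exact: inv2eta2_ge0.
move=> u /=; rewrite in_itv/= => /andP[hu ux].
have uy : u <= y by lra.
apply: (le_trans _ (integral_itv_ge uy c0 _)); last first.
  by move=> z /andP[? ?]; apply: hc; lra.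
by rewrite lee_fin ler_wpM2l //; lra.
Qed.

Lemma Gfun_ge (mu : probability R R) y a (A : set R) K :
  measurable A -> 0 <= K ->
  (forall x, A x -> (K%:E <= qfun eta y (y + a * x))%E) ->
  (K%:E * mu A <= Gfun eta mu y a)%E.
Proof.
by move=> mA K0 hA; apply: integral_ge_mul_measure => // x _; apply: qfun_ge0.
Qed.

Lemma qfun_ge_linear_growth (C M y h x : R) : 0 < C -> 0 <= M -> M < y ->
  0 < h -> y + h <= x -> (forall z, M < z -> `|eta z| <= C * z) ->
  (((h / (y + h)) ^+ 2 / (2 * C ^+ 2))%:E <= qfun eta y x)%E.
Proof.
move=> C0 M0 My h0 hx etaC; have Cyh : 0 < C * (y + h) by rewrite mulr_gt0 //; lra.
apply: le_trans (qfun_ge_right (c := 2 / (C * (y + h)) ^+ 2) h0 hx _ _).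
- by rewrite lee_fin le_eqVlt; apply/orP; left; apply/eqP; field; lra.
- by rewrite divr_ge0 // sqr_ge0.
move=> z /andP[yz zyh]; apply: inv2eta2_ge; apply: le_trans (etaC z _) _; first lra.
by rewrite ler_wpM2l // ltW.
Qed.

Lemma qfun_ge_linear_vanishing (C l y h x : R) : 0 < C -> l < y ->
  0 < h -> x <= y - h -> (forall z, z <= l -> eta z = 0) ->
  (forall z, l < z <= y -> `|eta z| <= C * (z - l)) ->
  (((h / (y - l)) ^+ 2 / (2 * C ^+ 2))%:E <= qfun eta y x)%E.
Proof.
move=> C0 ly h0 hx eta_off etaC.
have Cyl : 0 < C * (y - l) by rewrite mulr_gt0 // subr_gt0.
apply: le_trans (qfun_ge_left (c := 2 / (C * (y - l)) ^+ 2) h0 hx _ _).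
- by rewrite lee_fin le_eqVlt; apply/orP; left; apply/eqP; field; lra.
- by rewrite divr_ge0 // sqr_ge0.
move=> z /andP[_ zy]; apply: inv2eta2_ge.
have [zl|lz] := leP z l.
  by rewrite eta_off ?normr0 ?mulr_ge0 ?subr_ge0 // ltW.
have := etaC z; rewrite lz zy => /(_ isT) /le_trans; apply.
by apply: ler_wpM2l; [exact: ltW | lra].
Qed.

End q_lower_bounds.

Section liminf_Gfun_abar.
Variables (R : realType) (l : R) (eta : R -> R) (mu : probability R R).
Hypothesis supp_lt0 : inf (supp mu) < 0.

Lemma abarE y : abar mu l y = (y - l) / - inf (supp mu).
Proof. by rewrite /abar -[LHS]mulrNN opprB -invrN. Qed.

Lemma liminf_Gfun_abar_pinfty_gt0 (d : R) : 0 < d ->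
  (0 < mu `[d, +oo[%classic)%E ->
  (limf_esup (fun x => (`|eta x| / x)%:E) (+oo%R) < +oo)%E ->
  (0 < limf_einf (fun y => Gfun eta mu y (abar mu l y)) (+oo%R))%E.
Proof.
move=> d0 mud /norm_le_linear_pinfty[C [M [C0 M0 etaC]]].
set k := d / - inf (supp mu); have k0 : 0 < k by rewrite divr_gt0 // oppr_gt0.
set K := (k / (2 + k)) ^+ 2 / (2 * C ^+ 2).
have K0 : 0 < K.
  apply: divr_gt0; last by rewrite mulr_gt0 // exprn_gt0.
  by rewrite exprn_gt0 // divr_gt0 //; lra.
apply: (lt_le_trans _ (limf_einf_ge (e := (K%:E * mu `[d, +oo[%classic)%E) _)).
  by rewrite mule_gt0 // lte_fin.
exists (Num.max M (Num.max l (2 * l))); split; first exact: num_real.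
move=> y /=; rewrite !gt_max => /and3P[My ly l2y].
apply: Gfun_ge => //; first exact: ltW.
move=> x /=; rewrite in_itv/= andbT => dx.
have h0 : 0 < k * (y - l) by rewrite mulr_gt0 // subr_gt0.
apply: le_trans (qfun_ge_linear_growth C0 M0 My h0 _ etaC); last first.
  rewrite lerD2l abarE [leLHS]mulrC -[leRHS]mulrA.
  apply: ler_wpM2l; first by rewrite subr_ge0 ltW.
  by rewrite [leRHS]mulrC ler_pM2r // invr_gt0 oppr_gt0.
(* [k / (2 + k) <= h / (y + h)] for [h = k (y - l)] amounts to [2 l <= y]. *)
have k2 : 0 < 2 + k by lra.
have yh : 0 < y + k * (y - l) by lra.
rewrite lee_fin ler_pM2r ?invr_gt0 ?mulr_gt0 ?exprn_gt0 //.
have r1 : 0 <= k / (2 + k) by exact: ltW (divr_gt0 k0 k2).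
have r2 : 0 <= k * (y - l) / (y + k * (y - l)) by exact: ltW (divr_gt0 h0 yh).
rewrite ler_sqr ?nnegrE // ler_pdivlMr // [leLHS]mulrAC ler_pdivrMr //.
have : 0 <= k * (y - 2 * l) by rewrite mulr_ge0 //; lra.
nra.
Qed.

Lemma liminf_Gfun_abar_right_gt0 (d : R) : 0 < d ->
  (0 < mu `]-oo, (- d)%R]%classic)%E -> (forall z, z <= l -> eta z = 0) ->
  (limf_esup (fun x => (`|eta x| / (x - l))%:E) (l^'+) < +oo)%E ->
  (0 < limf_einf (fun y => Gfun eta mu y (abar mu l y)) (l^'+))%E.
Proof.
move=> d0 mud eta_off /norm_le_linear_right[C [e [C0 e0 etaC]]].
set k := d / - inf (supp mu); have k0 : 0 < k by rewrite divr_gt0 // oppr_gt0.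
set K := k ^+ 2 / (2 * C ^+ 2).
have K0 : 0 < K.
  by apply: divr_gt0; [exact: exprn_gt0 | rewrite mulr_gt0 // exprn_gt0].
apply: (lt_le_trans _
  (limf_einf_ge (e := (K%:E * mu `]-oo, (- d)%R]%classic)%E) _)).
  by rewrite mule_gt0 // lte_fin.
apply/nbhs_ballP; exists e => // y; rewrite ball_itv/= in_itv/= => /andP[_ yle] ly.
apply: Gfun_ge => //; first exact: ltW.
move=> x /=; rewrite in_itv/= => xd.
have yl0 : 0 < y - l by rewrite subr_gt0.
have h0 : 0 < k * (y - l) by rewrite mulr_gt0.
apply: le_trans (qfun_ge_linear_vanishing C0 ly h0 _ eta_off _).
- by rewrite /K mulfK ?lt0r_neq0.
- rewrite lerD2l lerNr abarE -mulrN [leLHS]mulrC -[leRHS]mulrA.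
  apply: ler_wpM2l; first exact: ltW.
  by rewrite [leRHS]mulrC ler_pM2r ?invr_gt0 ?oppr_gt0 // lerNr.
by move=> z /andP[lz zy]; apply: etaC; apply/andP; split; lra.
Qed.

End liminf_Gfun_abar.

Theorem mainTheorem8 (R : realType) (l : R) (eta : R -> R)
  (mu : probability R R)
  (eta_meas : measurable_fun setT eta)
  (eta_nz : forall x, l < x -> eta x != 0)
  (eta_off : forall x, x <= l -> eta x = 0)
  (eta_loc : forall a b, l < a -> a <= b ->
     (\int[lebesgue_measure]_(z in `[a, b]) (1 / (eta z ^+ 2))%:E < +oo)%E)
  (mu_int : mu.-integrable setT (fun x => x%:E))
  (mu_centered : (\int[mu]_x x%:E = 0)%E)
  (mu_ndirac : ~ (forall A : set R, measurable A -> mu A = \d_(0 : R) A))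
  (A2_supp : exists m : R, forall x, supp mu x -> m <= x)
  (A2_int : exists y0, l < y0 /\ forall a : R, 0 < a ->
     (\int[mu]_(x in `[0%R, +oo[) qfun eta y0 (y0 + a * x) < +oo)%E)
  (eta_l : (limf_esup (fun x => (`|eta x| / (x - l))%:E) (l^'+) < +oo)%E)
  (eta_inf : (limf_esup (fun x => (`|eta x| / x)%:E) (+oo%R) < +oo)%E) :
  (0 < limf_einf (fun y => Gfun eta mu y (abar mu l y)) (+oo%R))%E /\
  (0 < limf_einf (fun y => Gfun eta mu y (abar mu l y)) (l^'+))%E.
Proof.
have [[dp dp0 mu_pos] [dn dn0 mu_neg]] :=
  centred_not_dirac_both_sides mu_int mu_centered mu_ndirac.
have supp_lt0 : inf (supp mu) < 0.
  by apply: le_lt_trans (inf_supp_le A2_supp mu_neg) _; rewrite oppr_lt0.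
split; first exact: liminf_Gfun_abar_pinfty_gt0 dp0 mu_pos eta_inf.
exact: liminf_Gfun_abar_right_gt0 dn0 mu_neg eta_off eta_l.
Qed.
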